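(* Let $A$ be a finite type $k$-algebra (not necessarily unital) and let $n$ be a positive integer. Then $A$ and $\mathrm{M}_n(A)$ are stratified equivalent.
   Context: $k=\mathcal{O}(X)$ is the coordinate algebra of a complex affine variety $X$. A $k$-algebra is a (not necessarily unital or commutative) $\mathbb{C}$-algebra $A$ which is a unital left $k$-module with $\lambda(\omega a)=\omega(\lambda a)=(\lambda\omega)a$ and $\omega(a_1a_2)=(\omega a_1)a_2=a_1(\omega a_2)$; morphisms are $k$-linear algebra morphisms; finite type means finitely generated as a $k$-module. $\mathrm{M}_n(A)$ is the $k$-algebra of $n\times n$ matrices over $A$ with $k$ acting entrywise. Representations carry an $A$-action and a unital $k$-action with $(\omega a)v=\omega(av)=a(\omega v)$; irreducible means $AV\neq0$ and no subspace $0\neq U\neq V$ stable under $A$ and $k$. $\mathrm{Prim}(A)$ is the set of kernels of irreducible representations; a $k$-ideal is an ideal stable under $k$. Stratified equivalence: a morphism $f\colon A\to B$ of finite type $k$-algebras is spectrum preserving if for each primitive ideal $J\subset B$ there is a unique primitive ideal $I\subset A$ with $I\supset f^{-1}(J)$, and the resulting map $\mathrm{Prim}(B)\to\mathrm{Prim}(A)$ is a bijection; it is spectrum preserving with respect to filtrations if there are $k$-ideals $0=I_0\subset\cdots\subset I_r=A$ and $0=J_0\subset\cdots\subset J_r=B$ with $f(I_j)\subset J_j$ and each $I_j/I_{j-1}\to J_j/J_{j-1}$ spectrum preserving. An algebraic variation of $k$-structure is a unital $\mathbb{C}$-algebra $A$ with a unital morphism $\Psi\colon k\to Z(A[t,t^{-1}])$,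 giving $k$-algebras $A_\zeta$ ($\zeta\in\mathbb{C}^\times$) with $k$ acting via $ev(\zeta)\circ\Psi$, $ev(\zeta)(\sum a_jt^j)=\sum a_j\zeta^j$. Stratified equivalence is the equivalence relation on finite type $k$-algebras generated by: $A\sim B$ whenever there is a morphism $A\to B$ spectrum preserving with respect to filtrations; and $A_\zeta\sim A_\eta$ for all $\zeta,\eta\in\mathbb{C}^\times$ whenever $\{A_\zeta\}$ is an algebraic variation of $k$-structure with every $A_\zeta$ a unital finite type $k$-algebra. *)

From HB Require Import structures.
From mathcomp Require Import all_boot all_order all_algebra.
From mathcomp Require Import complex Rstruct.
Set Implicit Arguments. Unset Strict Implicit. Unset Printing Implicit Defensive.
Import Order.TTheory GRing.Theory Num.Theory.
Local Open Scope ring_scope.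

Definition CC : numClosedFieldType := (Rdefinitions.R)[i].

(** * k = O(X): a finitely generated reduced commutative unital C-algebra *)
Inductive gen_by (k : comAlgType CC) (s : seq k) : k -> Prop :=
  | gen_gen x : x \in s -> gen_by s x
  | gen_const (c : CC) : gen_by s (c%:A)
  | gen_add x y : gen_by s x -> gen_by s y -> gen_by s (x + y)
  | gen_mul x y : gen_by s x -> gen_by s y -> gen_by s (x * y).

Definition coord_alg (k : comAlgType CC) : Prop :=
  (exists s : seq k, forall x, gen_by s x) /\
  (forall (x : k) (m : nat), x ^+ m = 0 -> x = 0).

Section KAlg.
Variable k : comAlgType CC.

Record kraw := KRaw {
  car : zmodType;
  cscale : CC -> car -> car;
  kmul : car -> car -> car;
  kact : k -> car -> car
}.
Arguments cscale : clear implicits.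
Arguments kmul : clear implicits.
Arguments kact : clear implicits.

Definition is_kalg (A : kraw) : Prop :=
  (forall a, cscale A 1 a = a) /\
  (forall l m a, cscale A (l * m) a = cscale A l (cscale A m a)) /\
  (forall l m a, cscale A (l + m) a = cscale A l a + cscale A m a) /\
  (forall l a b, cscale A l (a + b) = cscale A l a + cscale A l b) /\
  (forall a b c, kmul A (kmul A a b) c = kmul A a (kmul A b c)) /\
  (forall a b c, kmul A (a + b) c = kmul A a c + kmul A b c) /\
  (forall a b c, kmul A a (b + c) = kmul A a b + kmul A a c) /\
  (forall l a b, kmul A (cscale A l a) b = cscale A l (kmul A a b)) /\
  (forall l a b, kmul A a (cscale A l b) = cscale A l (kmul A a b)) /\
  (forall a, kact A 1 a = a) /\
  (forall w1 w2 a, kact A (w1 * w2) a = kact A w1 (kact A w2 a)) /\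
  (forall w1 w2 a, kact A (w1 + w2) a = kact A w1 a + kact A w2 a) /\
  (forall w a b, kact A w (a + b) = kact A w a + kact A w b) /\
  (forall l w a, cscale A l (kact A w a) = kact A w (cscale A l a) /\
                 kact A w (cscale A l a) = kact A (l *: w) a) /\
  (forall w a b, kact A w (kmul A a b) = kmul A (kact A w a) b /\
                 kmul A (kact A w a) b = kmul A a (kact A w b)).

Definition finite_type (A : kraw) : Prop :=
  exists (m : nat) (s : 'I_m -> car A),
    forall a, exists w : 'I_m -> k, a = \sum_(i < m) kact A (w i) (s i).

Definition ft_kalg (A : kraw) : Prop := is_kalg A /\ finite_type A.

Definition unital (A : kraw) : Prop :=
  exists e, forall a, kmul A e a = a /\ kmul A a e = a.

Definition kmorph (A B : kraw) (f : car A -> car B) : Prop :=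
  (forall a b, f (a + b) = f a + f b) /\
  (forall l a, f (cscale A l a) = cscale B l (f a)) /\
  (forall a b, f (kmul A a b) = kmul B (f a) (f b)) /\
  (forall w a, f (kact A w a) = kact B w (f a)).

Definition same_set (T : Type) (P Q : T -> Prop) := forall x, P x <-> Q x.
Definition sub_set (T : Type) (P Q : T -> Prop) := forall x, P x -> Q x.
Definition full_set (T : Type) : T -> Prop := fun _ => True.
Definition zero_set (T : zmodType) : T -> Prop := fun x => x = 0.

Definition kideal (A : kraw) (I : car A -> Prop) : Prop :=
  I 0 /\ (forall a b, I a -> I b -> I (a + b)) /\ (forall a, I a -> I (- a)) /\
  (forall l a, I a -> I (cscale A l a)) /\
  (forall a b, I b -> I (kmul A a b)) /\ (forall a b, I a -> I (kmul A a b)) /\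
  (forall w a, I a -> I (kact A w a)).

(** * Representations of the subquotient k-algebra I/J (J ⊆ I k-ideals of A).
    Elements of I/J are represented by elements of I; a representation of
    I/J is an action of the elements of I which kills J.  For I = A and
    J = 0 this is literally a representation of A. *)
Definition is_rep (A : kraw) (I J : car A -> Prop) (V : zmodType)
    (vscale : CC -> V -> V) (act : car A -> V -> V) (kv : k -> V -> V) : Prop :=
  (forall v, vscale 1 v = v) /\
  (forall l m v, vscale (l * m) v = vscale l (vscale m v)) /\
  (forall l m v, vscale (l + m) v = vscale l v + vscale m v) /\
  (forall l v w, vscale l (v + w) = vscale l v + vscale l w) /\
  (forall v, kv 1 v = v) /\
  (forall w1 w2 v, kv (w1 * w2) v = kv w1 (kv w2 v)) /\
  (forall w1 w2 v, kv (w1 + w2) v = kv w1 v + kv w2 v) /\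
  (forall w v u, kv w (v + u) = kv w v + kv w u) /\
  (forall l w v, vscale l (kv w v) = kv w (vscale l v) /\
                 kv w (vscale l v) = kv (l *: w) v) /\
  (forall a b v, I a -> I b -> act (a + b) v = act a v + act b v) /\
  (forall a v u, I a -> act a (v + u) = act a v + act a u) /\
  (forall l a v, I a -> act (cscale A l a) v = vscale l (act a v)) /\
  (forall l a v, I a -> act a (vscale l v) = vscale l (act a v)) /\
  (forall a b v, I a -> I b -> act (kmul A a b) v = act a (act b v)) /\
  (forall w a v, I a -> act (kact A w a) v = kv w (act a v) /\
                        kv w (act a v) = act a (kv w v)) /\
  (forall a v, J a -> act a v = 0).

Definition is_irred_rep (A : kraw) (I J : car A -> Prop) (V : zmodType)
    (vscale : CC -> V -> V) (act : car A -> V -> V) (kv : k -> V -> V) : Prop :=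
  is_rep I J vscale act kv /\
  (exists a v, I a /\ act a v <> 0) /\
  (forall U : V -> Prop,
     U 0 -> (forall v u, U v -> U u -> U (v + u)) ->
     (forall l v, U v -> U (vscale l v)) ->
     (forall w v, U v -> U (kv w v)) ->
     (forall a v, I a -> U v -> U (act a v)) ->
     (forall v, U v -> v = 0) \/ (forall v, U v)).

(** P is a primitive ideal of I/J (represented by its preimage in I). *)
Definition prim_sq (A : kraw) (I J : car A -> Prop) (P : car A -> Prop) : Prop :=
  exists (V : zmodType) (vscale : CC -> V -> V) (act : car A -> V -> V)
         (kv : k -> V -> V),
    is_irred_rep I J vscale act kv /\
    same_set P (fun a => I a /\ forall v, act a v = 0).

Definition prim (A : kraw) (P : car A -> Prop) : Prop :=
  prim_sq (@full_set (car A)) (@zero_set (car A)) P.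

Definition spec_pres_sq (A B : kraw) (f : car A -> car B)
    (IA JA : car A -> Prop) (IB JB : car B -> Prop) : Prop :=
  let pre (P : car B -> Prop) := fun a => IA a /\ P (f a) in
  (forall P, prim_sq IB JB P ->
     exists Q, prim_sq IA JA Q /\ sub_set (pre P) Q /\
       forall Q', prim_sq IA JA Q' -> sub_set (pre P) Q' -> same_set Q Q') /\
  (forall P1 P2 Q, prim_sq IB JB P1 -> prim_sq IB JB P2 -> prim_sq IA JA Q ->
     sub_set (pre P1) Q -> sub_set (pre P2) Q -> same_set P1 P2) /\
  (forall Q, prim_sq IA JA Q -> exists P, prim_sq IB JB P /\ sub_set (pre P) Q).

Definition spec_pres (A B : kraw) (f : car A -> car B) : Prop :=
  spec_pres_sq f (@full_set (car A)) (@zero_set (car A))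
                 (@full_set (car B)) (@zero_set (car B)).

Definition spec_pres_filt (A B : kraw) (f : car A -> car B) : Prop :=
  exists (r : nat) (I : nat -> car A -> Prop) (J : nat -> car B -> Prop),
    same_set (I 0%N) (@zero_set (car A)) /\ same_set (I r) (@full_set (car A)) /\
    same_set (J 0%N) (@zero_set (car B)) /\ same_set (J r) (@full_set (car B)) /\
    (forall j, (j <= r)%N -> kideal (I j) /\ kideal (J j)) /\
    (forall j, (0 < j <= r)%N -> sub_set (I j.-1) (I j) /\ sub_set (J j.-1) (J j)) /\
    (forall j a, (j <= r)%N -> I j a -> J j (f a)) /\
    (forall j, (0 < j <= r)%N -> spec_pres_sq f (I j) (I j.-1) (J j) (J j.-1)).

(** A Laurent polynomial (n, s) in A[t,t^-1] stands for sum_i s_i t^(i - n). *)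
Definition laurent (A : algType CC) := (nat * seq A)%type.

Definition lcoef (A : algType CC) (x : laurent A) (j : int) : A :=
  match (j + (x.1)%:Z)%R with
  | Posz m => nth 0 x.2 m
  | Negz _ => 0
  end.

Definition lmul (A : algType CC) (x y : laurent A) : laurent A :=
  ((x.1 + y.1)%N,
   [seq \sum_(i < l.+1) nth 0 x.2 i * nth 0 y.2 (l - i)%N
      | l <- iota 0 (size x.2 + size y.2)]).

Definition lev (A : algType CC) (z : CC) (x : laurent A) : A :=
  \sum_(i < size x.2) (z ^ ((i%:Z) - (x.1)%:Z)%R) *: nth 0 x.2 i.

Definition is_variation (A : algType CC) (Psi : k -> laurent A) : Prop :=
  (forall w1 w2 j, lcoef (Psi (w1 + w2)) j = lcoef (Psi w1) j + lcoef (Psi w2) j) /\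
  (forall l w j, lcoef (Psi (l *: w)) j = l *: lcoef (Psi w) j) /\
  (forall w1 w2 j, lcoef (Psi (w1 * w2)) j = lcoef (lmul (Psi w1) (Psi w2)) j) /\
  (forall j, lcoef (Psi 1) j = if j == 0 then 1 else 0) /\
  (forall w (x : laurent A) j, lcoef (lmul (Psi w) x) j = lcoef (lmul x (Psi w)) j).

Definition var_alg (A : algType CC) (Psi : k -> laurent A) (z : CC) : kraw :=
  @KRaw (A : zmodType) (fun l a => l *: a) (fun a b => a * b)
        (fun w a => lev z (Psi w) * a).

Inductive strat_eq : kraw -> kraw -> Prop :=
  | se_refl A : ft_kalg A -> strat_eq A A
  | se_sym A B : strat_eq A B -> strat_eq B A
  | se_trans A B C : strat_eq A B -> strat_eq B C -> strat_eq A C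
  | se_spec A B (f : car A -> car B) :
      ft_kalg A -> ft_kalg B -> kmorph f -> spec_pres_filt f -> strat_eq A B
  | se_var (A : algType CC) (Psi : k -> laurent A) :
      is_variation Psi ->
      (forall z : CC, z != 0 -> ft_kalg (var_alg Psi z) /\ unital (var_alg Psi z)) ->
      forall z e : CC, z != 0 -> e != 0 -> strat_eq (var_alg Psi z) (var_alg Psi e).

Definition Mn (A : kraw) (n : nat) : kraw :=
  @KRaw ('M[car A]_n : zmodType)
        (fun l M => map_mx (cscale A l) M)
        (fun M N => \matrix_(i, j) \sum_(l < n) kmul A (M i l) (N l j))
        (fun w M => map_mx (kact A w) M).

End KAlg.

From HB Require Import structures.
From mathcomp Require Import all_boot all_order all_algebra.
From mathcomp Require Import boolp.
Set Implicit Arguments. Unset Strict Implicit. Unset Printing Implicit Defensive.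
Import GRing.Theory.
Local Open Scope ring_scope.

(* The corner embedding [a |-> a e_oo] of [A] into [M_n(A)] is spectrum
   preserving, so the trivial filtration makes it a basic move of stratified
   equivalence.  An irreducible [M_n(A)]-module [V] restricts to the irreducible
   [A]-module spanned by the vectors [e_oj(b) v0], whose annihilator is the
   preimage of [ann V]; an irreducible [A]-module [U] gives the irreducible
   [M_n(A)]-module [U^n]; and [ann V] is determined by its preimage, since [M]
   lies in it iff every [(a M_ij b) e_oo] does.  Uniqueness of the primitive
   ideal above a preimage comes from the incomparability of primitive ideals of
   a finite type k-algebra: if [ann V1 <= ann V2], walking through the finitely
   many k-module generators of [A] produces a left ideal [L] and vectors [x], [y]
   such that [b x |-> b y] is a well-defined nonzero module map [V1 -> V2], which
   is injective because [V1] is irreducible. *)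

Section AdditiveMaps.
Variables (U V : zmodType) (f : U -> V).
Hypothesis fD : forall x y, f (x + y) = f x + f y.

Lemma additive0 : f 0 = 0.
Proof. by apply/eqP; rewrite -(subrr (f 0)) -{2}(addr0 0) fD addrK. Qed.

Lemma additiveN x : f (- x) = - f x.
Proof. by apply/eqP; rewrite -subr_eq0 opprK -fD addNr additive0. Qed.

Lemma additive_sum I (r : seq I) (P : pred I) (F : I -> U) :
  f (\sum_(i <- r | P i) F i) = \sum_(i <- r | P i) f (F i).
Proof. exact: (big_morph f fD additive0). Qed.

End AdditiveMaps.

Lemma exists_breaking_step (P : nat -> Prop) m :
  P 0%N -> ~ P m -> exists j, (j < m)%N /\ P j /\ ~ P j.+1.
Proof.
elim: m => [//|m IHm] P0 nPm.
have [Pm|nPm'] := pselect (P m); first by exists m.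
by have [j [ltjm PjnPj]] := IHm P0 nPm'; exists j; split; first exact: ltnW.
Qed.

Section KAlgebraLaws.
Variables (k : comAlgType CC) (X : kraw k).
Hypothesis HX : is_kalg X.

Local Notation cs := (@cscale k X).
Local Notation km := (@kmul k X).
Local Notation ka := (@kact k X).

Local Ltac kalg_laws :=
  case: HX => [? [? [? [? [? [? [? [? [? [? [? [? [? [kaZ kaM]]]]]]]]]]]]]].

Lemma cscale1 a : cs 1 a = a. Proof. by kalg_laws. Qed.
Lemma cscaleM l m a : cs (l * m) a = cs l (cs m a). Proof. by kalg_laws. Qed.
Lemma cscaleDl l m a : cs (l + m) a = cs l a + cs m a. Proof. by kalg_laws. Qed.
Lemma cscaleDr l a b : cs l (a + b) = cs l a + cs l b. Proof. by kalg_laws. Qed.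
Lemma kmulA a b c : km (km a b) c = km a (km b c). Proof. by kalg_laws. Qed.
Lemma kmulDl a b c : km (a + b) c = km a c + km b c. Proof. by kalg_laws. Qed.
Lemma kmulDr a b c : km a (b + c) = km a b + km a c. Proof. by kalg_laws. Qed.
Lemma kmulZl l a b : km (cs l a) b = cs l (km a b). Proof. by kalg_laws. Qed.
Lemma kmulZr l a b : km a (cs l b) = cs l (km a b). Proof. by kalg_laws. Qed.
Lemma kact1 a : ka 1 a = a. Proof. by kalg_laws. Qed.
Lemma kactM w1 w2 a : ka (w1 * w2) a = ka w1 (ka w2 a). Proof. by kalg_laws. Qed.
Lemma kactDl w1 w2 a : ka (w1 + w2) a = ka w1 a + ka w2 a. Proof. by kalg_laws. Qed.
Lemma kactDr w a b : ka w (a + b) = ka w a + ka w b. Proof. by kalg_laws. Qed.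
Lemma cscale_kact l w a : cs l (ka w a) = ka w (cs l a).
Proof. by kalg_laws; case: (kaZ l w a). Qed.
Lemma kact_cscale l w a : ka w (cs l a) = ka (l *: w) a.
Proof. by kalg_laws; case: (kaZ l w a). Qed.
Lemma kact_kmull w a b : ka w (km a b) = km (ka w a) b.
Proof. by kalg_laws; case: (kaM w a b). Qed.
Lemma kact_kmulr w a b : ka w (km a b) = km a (ka w b).
Proof. by kalg_laws; case: (kaM w a b) => -> ->. Qed.

Lemma kmul0l b : km 0 b = 0. Proof. exact: (additive0 (fun x y => kmulDl x y b)). Qed.
Lemma kmul0r a : km a 0 = 0. Proof. exact: (additive0 (kmulDr a)). Qed.
Lemma cscale0 l : cs l 0 = 0. Proof. exact: (additive0 (cscaleDr l)). Qed.
Lemma kact0 w : ka w 0 = 0. Proof. exact: (additive0 (kactDr w)). Qed.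

Lemma kmul_suml I r P (F : I -> car X) b :
  km (\sum_(i <- r | P i) F i) b = \sum_(i <- r | P i) km (F i) b.
Proof. exact: (additive_sum (fun x y => kmulDl x y b)). Qed.
Lemma kmul_sumr I r P (F : I -> car X) a :
  km a (\sum_(i <- r | P i) F i) = \sum_(i <- r | P i) km a (F i).
Proof. exact: (additive_sum (kmulDr a)). Qed.
Lemma cscale_sum I r P (F : I -> car X) l :
  cs l (\sum_(i <- r | P i) F i) = \sum_(i <- r | P i) cs l (F i).
Proof. exact: (additive_sum (cscaleDr l)). Qed.
Lemma kact_sum I r P (F : I -> car X) w :
  ka w (\sum_(i <- r | P i) F i) = \sum_(i <- r | P i) ka w (F i).
Proof. exact: (additive_sum (kactDr w)). Qed.

End KAlgebraLaws.

Section RepresentationLaws.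
Variables (k : comAlgType CC) (X : kraw k) (V : zmodType).
Variables (vs : CC -> V -> V) (act : car X -> V -> V) (kv : k -> V -> V).

Definition annihilates (a : car X) : Prop := forall v, act a v = 0.

Definition annihilates_on (S : V -> Prop) (a : car X) : Prop :=
  forall v, S v -> act a v = 0.

Hypothesis Hr : is_rep (@full_set (car X)) (@zero_set (car X)) vs act kv.

Local Ltac rep_laws :=
  case: Hr => [? [? [? [? [? [? [? [? [kvZ [aDl [aDr [aZl [aZr [aM [aK _]]]]]]]]]]]]]]].

Lemma vscale1 v : vs 1 v = v. Proof. by rep_laws. Qed.
Lemma vscaleM l m v : vs (l * m) v = vs l (vs m v). Proof. by rep_laws. Qed.
Lemma vscaleDl l m v : vs (l + m) v = vs l v + vs m v. Proof. by rep_laws. Qed.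
Lemma vscaleDr l v u : vs l (v + u) = vs l v + vs l u. Proof. by rep_laws. Qed.
Lemma vkact1 v : kv 1 v = v. Proof. by rep_laws. Qed.
Lemma vkactM w1 w2 v : kv (w1 * w2) v = kv w1 (kv w2 v). Proof. by rep_laws. Qed.
Lemma vkactDl w1 w2 v : kv (w1 + w2) v = kv w1 v + kv w2 v. Proof. by rep_laws. Qed.
Lemma vkactDr w v u : kv w (v + u) = kv w v + kv w u. Proof. by rep_laws. Qed.
Lemma vscale_vkact l w v : vs l (kv w v) = kv w (vs l v).
Proof. by rep_laws; case: (kvZ l w v). Qed.
Lemma vkact_vscale l w v : kv w (vs l v) = kv (l *: w) v.
Proof. by rep_laws; case: (kvZ l w v). Qed.
Lemma actDl a b v : act (a + b) v = act a v + act b v. Proof. by rep_laws; exact: aDl. Qed.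
Lemma actDr a v u : act a (v + u) = act a v + act a u. Proof. by rep_laws; exact: aDr. Qed.
Lemma act_cscale l a v : act (cscale l a) v = vs l (act a v). Proof. by rep_laws; exact: aZl. Qed.
Lemma act_vscale l a v : act a (vs l v) = vs l (act a v). Proof. by rep_laws; exact: aZr. Qed.
Lemma act_kmul a b v : act (kmul a b) v = act a (act b v). Proof. by rep_laws; exact: aM. Qed.
Lemma act_kact w a v : act (kact w a) v = kv w (act a v).
Proof. by rep_laws; case: (aK w a v). Qed.
Lemma act_vkact w a v : act a (kv w v) = kv w (act a v).
Proof. by rep_laws; case: (aK w a v). Qed.

Lemma vscale0 l : vs l 0 = 0. Proof. exact: (additive0 (vscaleDr l)). Qed.
Lemma vkact0 w : kv w 0 = 0. Proof. exact: (additive0 (vkactDr w)). Qed.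
Lemma act0l v : act 0 v = 0. Proof. exact: (additive0 (fun a b => actDl a b v)). Qed.
Lemma act0r a : act a 0 = 0. Proof. exact: (additive0 (actDr a)). Qed.
Lemma actNl a v : act (- a) v = - act a v.
Proof. exact: (additiveN (fun a b => actDl a b v)). Qed.
Lemma actBl a b v : act (a - b) v = act a v - act b v. Proof. by rewrite actDl actNl. Qed.

Lemma act_suml I r P (F : I -> car X) v :
  act (\sum_(i <- r | P i) F i) v = \sum_(i <- r | P i) act (F i) v.
Proof. exact: (additive_sum (fun a b => actDl a b v)). Qed.
Lemma act_sumr I r P (F : I -> V) a :
  act a (\sum_(i <- r | P i) F i) = \sum_(i <- r | P i) act a (F i).
Proof. exact: (additive_sum (actDr a)). Qed.
Lemma vscale_sum I r P (F : I -> V) l :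
  vs l (\sum_(i <- r | P i) F i) = \sum_(i <- r | P i) vs l (F i).
Proof. exact: (additive_sum (vscaleDr l)). Qed.
Lemma vkact_sum I r P (F : I -> V) w :
  kv w (\sum_(i <- r | P i) F i) = \sum_(i <- r | P i) kv w (F i).
Proof. exact: (additive_sum (vkactDr w)). Qed.

Section AnnihilatorLeftIdeal.
Variable S : V -> Prop.

Lemma annihilates_on0 : annihilates_on S 0.
Proof. by move=> v _; rewrite act0l. Qed.
Lemma annihilates_onB a b :
  annihilates_on S a -> annihilates_on S b -> annihilates_on S (a - b).
Proof. by move=> Sa Sb v Sv; rewrite actBl Sa // Sb // subr0. Qed.
Lemma annihilates_onD a b :
  annihilates_on S a -> annihilates_on S b -> annihilates_on S (a + b).
Proof. by move=> Sa Sb v Sv; rewrite actDl Sa // Sb // addr0. Qed.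
Lemma annihilates_on_cscale l a :
  annihilates_on S a -> annihilates_on S (cscale l a).
Proof. by move=> Sa v Sv; rewrite act_cscale Sa // vscale0. Qed.
Lemma annihilates_on_kact w a :
  annihilates_on S a -> annihilates_on S (kact w a).
Proof. by move=> Sa v Sv; rewrite act_kact Sa // vkact0. Qed.
Lemma annihilates_on_kmul c a :
  annihilates_on S a -> annihilates_on S (kmul c a).
Proof. by move=> Sa v Sv; rewrite act_kmul Sa // act0r. Qed.

End AnnihilatorLeftIdeal.
End RepresentationLaws.

Section IrreducibleRepresentations.
Variables (k : comAlgType CC) (X : kraw k) (V : zmodType).
Variables (vs : CC -> V -> V) (act : car X -> V -> V) (kv : k -> V -> V).
Hypothesis Hirr : is_irred_rep (@full_set (car X)) (@zero_set (car X)) vs act kv.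
Let Hr := proj1 Hirr.

Lemma irred_rep_nontrivial : exists a v, act a v <> 0.
Proof. by case: Hirr => _ [[a [v [_ nz]]] _]; exists a, v. Qed.

Lemma irred_rep_stable (U : V -> Prop) :
  U 0 -> (forall v u, U v -> U u -> U (v + u)) ->
  (forall l v, U v -> U (vs l v)) -> (forall w v, U v -> U (kv w v)) ->
  (forall a v, U v -> U (act a v)) ->
  (forall v, U v -> v = 0) \/ (forall v, U v).
Proof. by case: Hirr => _ [_ irr] U0 UD Us Uk Ua; apply: irr => // a v _; apply: Ua. Qed.

Lemma exists_nonzero_vec : exists v0 : V, v0 <> 0.
Proof.
have [a [v nz]] := irred_rep_nontrivial.
by exists v => v0; apply: nz; rewrite v0 (act0r Hr).
Qed.

Lemma annihilated_vec0 v : (forall a, act a v = 0) -> v = 0.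
Proof.
move=> annv.
have [|||||/(_ v annv)//|all_ann] := @irred_rep_stable (fun v => forall a, act a v = 0).
- by move=> a; rewrite (act0r Hr).
- by move=> x y hx hy a; rewrite (actDr Hr) hx hy addr0.
- by move=> l x hx a; rewrite (act_vscale Hr) hx (vscale0 Hr).
- by move=> w x hx a; rewrite (act_vkact Hr) hx (vkact0 Hr).
- by move=> b x hx a; rewrite -(act_kmul Hr) hx.
by have [a [x]] := irred_rep_nontrivial; rewrite all_ann.
Qed.

Lemma irred_rep_cyclic v0 : v0 <> 0 -> forall v, exists a, v = act a v0.
Proof.
move=> nz.
have [|||||gen0|//] := @irred_rep_stable (fun v => exists a, v = act a v0).
- by exists 0; rewrite (act0l Hr).
- by move=> x y [a ->] [b ->]; exists (a + b); rewrite (actDl Hr).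
- by move=> l x [a ->]; exists (cscale l a); rewrite (act_cscale Hr).
- by move=> w x [a ->]; exists (kact w a); rewrite (act_kact Hr).
- by move=> b x [a ->]; exists (kmul b a); rewrite (act_kmul Hr).
by case: nz; apply: annihilated_vec0 => a; apply: gen0; exists a.
Qed.

Lemma annihilates_on_orbit (S : V -> Prop) x :
  (exists b, annihilates_on act S b /\ act b x <> 0) ->
  forall v, exists2 b, annihilates_on act S b & v = act b x.
Proof.
move=> [b0 [Lb0 b0x]].
have [|||||Lx0|//] := @irred_rep_stable (fun v => exists2 b, annihilates_on act S b & v = act b x).
- by exists 0; [exact: (annihilates_on0 Hr) | rewrite (act0l Hr)].
- move=> _ _ [b Lb ->] [c Lc ->]; exists (b + c); first exact: (annihilates_onD Hr).
  by rewrite (actDl Hr).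
- move=> l _ [b Lb ->]; exists (cscale l b); first exact: (annihilates_on_cscale Hr).
  by rewrite (act_cscale Hr).
- move=> w _ [b Lb ->]; exists (kact w b); first exact: (annihilates_on_kact Hr).
  by rewrite (act_kact Hr).
- move=> c _ [b Lb ->]; exists (kmul c b); first exact: (annihilates_on_kmul Hr).
  by rewrite (act_kmul Hr).
by case: b0x; apply: Lx0; exists b0.
Qed.

End IrreducibleRepresentations.

Lemma primP (k : comAlgType CC) (X : kraw k) (Q : car X -> Prop) : prim Q <->
  exists (V : zmodType) (vs : CC -> V -> V) (act : car X -> V -> V) (kv : k -> V -> V),
    is_irred_rep (@full_set (car X)) (@zero_set (car X)) vs act kv /\
    forall a, Q a <-> annihilates act a.
Proof.
split=> -[V [vs [act [kv [Hirr eQ]]]]]; exists V, vs, act, kv; split=> // a.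
  by rewrite eQ; split=> [[]|].
by rewrite eQ; split=> [|[]].
Qed.

Section PrimitiveIdealsIncomparable.
Variables (k : comAlgType CC) (X : kraw k).
Hypothesis HX : is_kalg X.
Variables (V1 : zmodType) (vs1 : CC -> V1 -> V1) (act1 : car X -> V1 -> V1).
Variable kv1 : k -> V1 -> V1.
Hypothesis H1 : is_irred_rep (@full_set (car X)) (@zero_set (car X)) vs1 act1 kv1.
Variables (V2 : zmodType) (vs2 : CC -> V2 -> V2) (act2 : car X -> V2 -> V2).
Variable kv2 : k -> V2 -> V2.
Hypothesis H2 : is_irred_rep (@full_set (car X)) (@zero_set (car X)) vs2 act2 kv2.
Let R1 := proj1 H1.
Let R2 := proj1 H2.

(* [b x |-> b y] (for [b] in [L]) is a well-defined nonzero module map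
   [V1 -> V2], injective because its kernel is a proper submodule of [V1]. *)
Lemma annihilates_sub_of_module_map (S : V1 -> Prop) (x : V1) (y : V2) :
  let L := annihilates_on act1 S in
  (forall b, L b -> act1 b x = 0 -> act2 b y = 0) ->
  (exists b, L b /\ act2 b y <> 0) ->
  forall q, annihilates act2 q -> annihilates act1 q.
Proof.
move=> L map0 [b0 [Lb0 b0y]].
have map_eq b b' : L b -> L b' -> act1 b x = act1 b' x -> act2 b y = act2 b' y.
  move=> Lb Lb' ebb'; apply/eqP; rewrite -subr_eq0 -(actBl R2).
  by apply/eqP; apply: map0; [exact: (annihilates_onB R1) | rewrite (actBl R1) ebb' subrr].
have Lx_full : forall v, exists2 b, L b & v = act1 b x.
  apply: (annihilates_on_orbit H1); exists b0; split=> // b0x.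
  by apply: b0y; apply: map0.
pose ker v := forall b, L b -> act1 b x = v -> act2 b y = 0.
have ker_map f g h : (forall b, L b -> L (f b)) ->
    (forall b, act1 (f b) x = g (act1 b x)) -> (forall b, act2 (f b) y = h (act2 b y)) ->
    h 0 = 0 -> forall v, ker v -> ker (g v).
  move=> Lf f1 f2 h0 v kerv b Lb bx; have [b1 Lb1 e1] := Lx_full v.
  have -> : act2 b y = act2 (f b1) y by apply: map_eq => //; [exact: Lf | rewrite bx f1 -e1].
  by rewrite f2 (kerv b1).
have ker0 : forall v, ker v -> v = 0.
  have [|||||//|ker_full] := irred_rep_stable H1 (U := ker).
  - by move=> b Lb bx; apply: map0.
  - move=> v1 v2 ker1 ker2 b Lb bx.
    have [b1 Lb1 e1] := Lx_full v1; have [b2 Lb2 e2] := Lx_full v2.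
    rewrite (map_eq b (b1 + b2)) ?(actDl R2) ?(ker1 b1) ?(ker2 b2) ?addr0 //.
      exact: (annihilates_onD R1).
    by rewrite bx (actDl R1) e1 e2.
  - by move=> l; apply: (ker_map _ _ _ (annihilates_on_cscale R1 l)
      (act_cscale R1 l ^~ x) (act_cscale R2 l ^~ y) (vscale0 R2 l)).
  - by move=> w; apply: (ker_map _ _ _ (annihilates_on_kact R1 w)
      (act_kact R1 w ^~ x) (act_kact R2 w ^~ y) (vkact0 R2 w)).
  - by move=> c; apply: (ker_map _ _ _ (annihilates_on_kmul R1 c)
      (act_kmul R1 c ^~ x) (act_kmul R2 c ^~ y) (act0r R2 c)).
  by case: b0y; exact: (ker_full _ b0).
move=> q annq v; have [b Lb ->] := Lx_full v; apply: ker0 => b' Lb' eb'.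
rewrite (map_eq b' (kmul q b)) ?(act_kmul R2) ?annq //.
  exact: (annihilates_on_kmul R1).
by rewrite eb' (act_kmul R1).
Qed.

Hypothesis FT : finite_type X.

(* With generators [s i] and [v0 <> 0], the left ideals annihilating
   [s j v0, ..., s (m-1) v0] grow from [L 0 = ann V1] to [L m = X];
   the step where [y0] stops being annihilated yields the module map. *)
Lemma irred_annihilates_sub_sym :
  (forall a, annihilates act1 a -> annihilates act2 a) ->
  forall a, annihilates act2 a -> annihilates act1 a.
Proof.
move=> ann12.
have [m [s gen]] := FT.
have [v0 v0nz] := exists_nonzero_vec H1.
have [a2 [y0 a2y0]] := irred_rep_nontrivial H2.
pose S j v := exists2 i : 'I_m, (j <= i)%N & v = act1 (s i) v0.
pose L j := annihilates_on act1 (S j).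
have L0_ann b : L 0%N b -> annihilates act1 b.
  move=> Lb v; have [c ->] := irred_rep_cyclic H1 v0nz v.
  have [w ->] := gen c; rewrite -(act_kmul R1) (kmul_sumr HX) (act_suml R1).
  apply: big1 => i _.
  by rewrite -(kact_kmulr HX) (act_kact R1) (act_kmul R1) Lb ?(vkact0 R1) //; exists i.
pose Z j := forall b, L j b -> act2 b y0 = 0.
have Z0 : Z 0%N by move=> b /L0_ann /ann12.
have nZm : ~ Z m by move=> Zm; apply: a2y0; apply: Zm => v [i]; rewrite leqNgt ltn_ord.
have [j [ltjm [Zj nZj1]]] := exists_breaking_step Z0 nZm.
have [b /not_implyP [Lb by0]] : exists b, ~ (L j.+1 b -> act2 b y0 = 0).
  exact/existsNP.
apply: (@annihilates_sub_of_module_map (S j.+1) (act1 (s (Ordinal ltjm)) v0) y0);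
  last by exists b.
move=> b' Lb' bxj; apply: Zj => _ [i le_ji ->].
have [eji|ne_ij] := eqVneq (val i) j.
  by rewrite (_ : i = Ordinal ltjm) //; exact: val_inj.
by apply: (Lb' (act1 (s i) v0)); exists i; rewrite // ltn_neqAle eq_sym ne_ij.
Qed.

End PrimitiveIdealsIncomparable.

Lemma prim_sub_sym (k : comAlgType CC) (X : kraw k) (HX : is_kalg X)
    (FT : finite_type X) (Q1 Q2 : car X -> Prop) :
  prim Q1 -> prim Q2 -> sub_set Q1 Q2 -> sub_set Q2 Q1.
Proof.
move=> /primP[V1 [vs1 [act1 [kv1 [H1 eQ1]]]]] /primP[V2 [vs2 [act2 [kv2 [H2 eQ2]]]]].
move=> sub12 a /eQ2 ann2; apply/eQ1.
by apply: (irred_annihilates_sub_sym HX H1 H2 FT) ann2 => b /eQ1 /sub12 /eQ2.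
Qed.

Section MatrixUnits.
Variables (k : comAlgType CC) (A : kraw k).
Hypothesis HA : is_kalg A.
Variable n : nat.

Local Notation km := (@kmul k A).
Local Notation mm := (@kmul k (Mn A n)).

Definition single_mx (i j : 'I_n) (a : car A) : 'M[car A]_n :=
  \matrix_(p, q) (if (p == i) && (q == j) then a else 0).

Lemma mulMnE (M N : 'M[car A]_n) i j : mm M N i j = \sum_l km (M i l) (N l j).
Proof. by rewrite mxE. Qed.

Lemma Mn_kalg : is_kalg (Mn A n).
Proof.
do 4 (split; first by move=> *; apply/matrixP => i j;
  rewrite !mxE ?(cscale1 HA, cscaleM HA, cscaleDl HA, cscaleDr HA)).
split.
  move=> M N P; apply/matrixP => i j; rewrite !mulMnE.
  under eq_bigr do rewrite mulMnE (kmul_suml HA).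
  rewrite exchange_big /=; apply: eq_bigr => l _.
  by rewrite mulMnE (kmul_sumr HA); apply: eq_bigr => p _; rewrite (kmulA HA).
split.
  move=> M N P; apply/matrixP => i j; rewrite !mxE -big_split /=.
  by apply: eq_bigr => l _; rewrite mxE (kmulDl HA).
split.
  move=> M N P; apply/matrixP => i j; rewrite !mxE -big_split /=.
  by apply: eq_bigr => l _; rewrite mxE (kmulDr HA).
split.
  move=> l M N; apply/matrixP => i j; rewrite mulMnE !mxE (cscale_sum HA).
  by apply: eq_bigr => p _; rewrite mxE (kmulZl HA).
split.
  move=> l M N; apply/matrixP => i j; rewrite mulMnE !mxE (cscale_sum HA).
  by apply: eq_bigr => p _; rewrite mxE (kmulZr HA).
do 4 (split; first by move=> *; apply/matrixP => i j;
  rewrite !mxE ?(kact1 HA, kactM HA, kactDl HA, kactDr HA)).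
split.
  by move=> l w M; split; apply/matrixP => i j; rewrite !mxE ?(cscale_kact HA, kact_cscale HA).
move=> w M N; split; apply/matrixP => i j; rewrite !mxE ?(kact_sum HA);
  apply: eq_bigr => p _; rewrite !mxE ?(kact_kmull HA) //.
by rewrite -(kact_kmull HA) (kact_kmulr HA).
Qed.

Lemma single_mxD i j a b : single_mx i j (a + b) = single_mx i j a + single_mx i j b.
Proof. by apply/matrixP => p q; rewrite !mxE; case: andP; rewrite ?addr0. Qed.

Lemma single_mxB i j a b : single_mx i j (a - b) = single_mx i j a - single_mx i j b.
Proof. by rewrite single_mxD (additiveN (@single_mxD i j)). Qed.

Lemma single_mx0 i j : single_mx i j 0 = 0.
Proof. by apply/matrixP => p q; rewrite !mxE; case: andP. Qed.

Lemma single_mx_cscale i j l a :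
  single_mx i j (cscale l a) = @cscale k (Mn A n) l (single_mx i j a).
Proof. by apply/matrixP => p q; rewrite !mxE; case: andP; rewrite ?(cscale0 HA). Qed.

Lemma single_mx_kact i j w a :
  single_mx i j (kact w a) = @kact k (Mn A n) w (single_mx i j a).
Proof. by apply/matrixP => p q; rewrite !mxE; case: andP; rewrite ?(kact0 HA). Qed.

Lemma single_mx_sum i j I r P (F : I -> car A) :
  single_mx i j (\sum_(x <- r | P x) F x) = \sum_(x <- r | P x) single_mx i j (F x).
Proof. exact: (additive_sum (@single_mxD i j)). Qed.

Lemma matrix_single_sum (M : 'M[car A]_n) : M = \sum_i \sum_j single_mx i j (M i j).
Proof.
apply/matrixP => p q; rewrite summxE (bigD1 p) //= summxE (bigD1 q) //= mxE !eqxx.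
rewrite big1 => [|j /negbTE jq]; last by rewrite mxE [q == _]eq_sym jq andbF.
rewrite addr0 big1 => [|i /negbTE ip]; first by rewrite addr0.
by rewrite summxE big1 // => j _; rewrite mxE [p == _]eq_sym ip.
Qed.

Lemma mul_single_mx i j a (M : 'M[car A]_n) :
  mm (single_mx i j a) M = \sum_l single_mx i l (km a (M j l)).
Proof.
apply/matrixP => p q; rewrite mulMnE summxE (bigD1 j) //= big1 => [|l lj]; last first.
  by rewrite mxE (negbTE lj) andbF (kmul0l HA).
rewrite (bigD1 q) //= big1 => [|l lq]; last by rewrite mxE [q == _]eq_sym (negbTE lq) andbF.
by rewrite !mxE !eqxx andbT; case: (p == i); rewrite ?(kmul0l HA) !addr0.
Qed.

Lemma single_mx_mul i j p q a b :
  mm (single_mx i j a) (single_mx p q b) =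
  if j == p then single_mx i q (km a b) else 0.
Proof.
rewrite mul_single_mx (bigD1 q) //= big1 => [|l lq]; last first.
  by rewrite mxE (negbTE lq) andbF (kmul0r HA) single_mx0.
rewrite mxE eqxx andbT addr0; case: (j == p) => //.
by rewrite (kmul0r HA) single_mx0.
Qed.

Lemma single_mx_factor o i j a b :
  single_mx i j (km a b) = mm (single_mx i o a) (single_mx o j b).
Proof. by rewrite single_mx_mul eqxx. Qed.

Lemma single_mx_sandwich o i j a b (M : 'M[car A]_n) :
  mm (mm (single_mx o i a) M) (single_mx j o b) = single_mx o o (km (km a (M i j)) b).
Proof.
rewrite mul_single_mx (kmul_suml Mn_kalg) (bigD1 j) // big1 => [|l lj].
  by rewrite single_mx_mul eqxx Monoid.simpm.
by rewrite single_mx_mul (negbTE lj).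
Qed.

End MatrixUnits.

Lemma finite_type_of_fin_generators (k : comAlgType CC) (X : kraw k) (T : finType)
    (s : T -> car X) :
  (forall a, exists w : T -> k, a = \sum_t kact (w t) (s t)) -> finite_type X.
Proof.
move=> gen; exists #|T|, (fun i => s (enum_val i)) => a.
have [w ->] := gen a; exists (fun i => w (enum_val i)).
by rewrite -(big_enum_val (fun t => kact (w t) (s t))); apply: eq_bigl.
Qed.

Lemma Mn_finite_type (k : comAlgType CC) (A : kraw k) (n : nat) :
  is_kalg A -> finite_type A -> finite_type (Mn A n).
Proof.
move=> HA [m [s gen]].
pose sM (t : 'I_n * 'I_n * 'I_m) := single_mx t.1.1 t.1.2 (s t.2).
apply: (@finite_type_of_fin_generators _ (Mn A n) _ sM) => M.
have [w Mw] := fin_all_exists (fun ij : 'I_n * 'I_n => gen (M ij.1 ij.2)).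
exists (fun t => w t.1 t.2).
rewrite {1}(matrix_single_sum M) pair_bigA.
rewrite -(pair_bigA _ (fun ij l => @kact k (Mn A n) (w ij l) (sM (ij, l)))).
apply: eq_bigr => -[i j] _ /=; rewrite (Mw (i, j)) single_mx_sum.
apply: eq_bigr => l _; exact: single_mx_kact.
Qed.

Section CornerRepresentation.
Variables (k : comAlgType CC) (A : kraw k).
Hypothesis HA : is_kalg A.
Variables (n : nat) (o : 'I_n).
Variables (V : zmodType) (vs : CC -> V -> V) (act : car (Mn A n) -> V -> V).
Variable kv : k -> V -> V.
Hypothesis Hirr :
  is_irred_rep (@full_set (car (Mn A n))) (@zero_set (car (Mn A n))) vs act kv.
Let Hr := proj1 Hirr.

Local Notation km := (@kmul k A).
Local Notation E := (@single_mx k A n).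

Lemma act_matrix_single_sum M v : act M v = \sum_i \sum_j act (E i j (M i j)) v.
Proof.
rewrite {1}(matrix_single_sum M) (act_suml Hr); apply: eq_bigr => i _.
exact: (act_suml Hr).
Qed.

(* Otherwise row [o] kills all of [V]; as [M * E p q c] factors through
   [E o q c], every [E p q c v] would then be annihilated, hence zero. *)
Lemma row_annihilated_vec0 x : (forall i a, act (E o i a) x = 0) -> x = 0.
Proof.
move=> rowx.
have [|||||/(_ x rowx)//|row_all] :=
  irred_rep_stable Hirr (U := fun x => forall i a, act (E o i a) x = 0).
- by move=> i a; rewrite (act0r Hr).
- by move=> v u hv hu i a; rewrite (actDr Hr) hv hu addr0.
- by move=> l v hv i a; rewrite (act_vscale Hr) hv (vscale0 Hr).
- by move=> w v hv i a; rewrite (act_vkact Hr) hv (vkact0 Hr).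
- move=> M v hv i a; rewrite -(act_kmul Hr) (mul_single_mx HA) (act_suml Hr).
  by apply: big1 => l _; exact: hv.
have E_ann p q c v : act (E p q c) v = 0.
  apply: (annihilated_vec0 Hirr) => M; rewrite act_matrix_single_sum.
  apply: big1 => r _; apply: big1 => s _.
  rewrite -(act_kmul Hr) (single_mx_mul HA); case: eqP => _; last exact: (act0l Hr).
  by rewrite (single_mx_factor HA o) (act_kmul Hr) row_all (act0r Hr).
have [M [v]] := irred_rep_nontrivial Hirr.
by rewrite act_matrix_single_sum big1 // => i _; rewrite big1.
Qed.

Lemma annihilates_of_column M :
  (forall j b w, act M (act (E j o b) w) = 0) -> annihilates act M.
Proof.
move=> Mcol v; have [w0 w0nz] := exists_nonzero_vec Hirr.
have [K ->] := irred_rep_cyclic Hirr w0nz v.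
have [K' ->] := irred_rep_cyclic Hirr w0nz w0.
have -> : act K (act K' w0) =
    \sum_p \sum_q \sum_l act (E p o (K p l)) (act (E o q (K' l q)) w0).
  rewrite -(act_kmul Hr) act_matrix_single_sum; apply: eq_bigr => p _.
  apply: eq_bigr => q _; rewrite mulMnE single_mx_sum (act_suml Hr).
  by apply: eq_bigr => l _; rewrite (single_mx_factor HA o) (act_kmul Hr).
rewrite (act_sumr Hr) big1 // => p _; rewrite (act_sumr Hr) big1 // => q _.
by rewrite (act_sumr Hr) big1.
Qed.

Lemma annihilates_corner M : annihilates act M <->
  (forall i j a b, annihilates act (E o o (km (km a (M i j)) b))).
Proof.
split=> [annM i j a b v|annE].
  by rewrite -(single_mx_sandwich HA) !(act_kmul Hr) annM (act0r Hr).
apply: annihilates_of_column => j b w; apply: row_annihilated_vec0 => i a.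
by rewrite -!(act_kmul Hr) (single_mx_sandwich HA) annE.
Qed.

Section CornerModule.
Variable v0 : V.
Hypothesis v0nz : v0 <> 0.

(* The corner [e_oo V] (it contains every [E o i b v], see [corner_pred_row]). *)
Definition in_corner (x : V) : Prop :=
  exists b : 'I_n -> car A, x = \sum_l act (E o l (b l)) v0.

Definition corner_pred : pred V := fun x => `[< in_corner x >].

Lemma corner_predP x : reflect (in_corner x) (x \in corner_pred).
Proof. exact: asboolP. Qed.

Lemma corner_pred_zmod_closed : zmod_closed corner_pred.
Proof.
split.
  apply/corner_predP; exists (fun _ => 0); rewrite big1 // => l _.
  by rewrite single_mx0 (act0l Hr).
move=> _ _ /corner_predP[b ->] /corner_predP[c ->]; apply/corner_predP.
exists (fun l => b l - c l); rewrite -sumrB; apply: eq_bigr => l _.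
by rewrite single_mxB (actBl Hr).
Qed.

Inductive corner_vec := CornerVec x & x \in corner_pred.
Definition corner_val (x : corner_vec) : V := let: CornerVec x _ := x in x.
HB.instance Definition _ := [isSub for corner_val].
HB.instance Definition _ := [Choice of corner_vec by <:].
HB.instance Definition _ :=
  GRing.SubChoice_isSubZmodule.Build V corner_pred corner_vec corner_pred_zmod_closed.

Lemma corner_pred_row i b v : act (E o i b) v \in corner_pred.
Proof.
apply/corner_predP; have [M ->] := irred_rep_cyclic Hirr v0nz v.
exists (fun l => km b (M i l)).
by rewrite -(act_kmul Hr) (mul_single_mx HA) (act_suml Hr).
Qed.

Lemma corner_pred_vs l x : x \in corner_pred -> vs l x \in corner_pred.
Proof.
move=> /corner_predP[b ->]; apply/corner_predP.
exists (fun j => cscale l (b j)); rewrite (vscale_sum Hr).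
by apply: eq_bigr => j _; rewrite (single_mx_cscale HA) (act_cscale Hr).
Qed.

Lemma corner_pred_kv w x : x \in corner_pred -> kv w x \in corner_pred.
Proof.
move=> /corner_predP[b ->]; apply/corner_predP.
exists (fun j => kact w (b j)); rewrite (vkact_sum Hr).
by apply: eq_bigr => j _; rewrite (single_mx_kact HA) (act_kact Hr).
Qed.

Definition corner_vs l (x : corner_vec) : corner_vec :=
  Sub (vs l (val x)) (corner_pred_vs l (valP x)).
Definition corner_kv w (x : corner_vec) : corner_vec :=
  Sub (kv w (val x)) (corner_pred_kv w (valP x)).
Definition corner_act a (x : corner_vec) : corner_vec :=
  Sub (act (E o o a) (val x)) (corner_pred_row o a (val x)).
Definition row_vec i b v : corner_vec := Sub (act (E o i b) v) (corner_pred_row i b v).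

Lemma corner_is_rep :
  is_rep (@full_set (car A)) (@zero_set (car A)) corner_vs corner_act corner_kv.
Proof.
do 8 (split; first by move=> *; apply: val_inj; rewrite /= ?(vscale1 Hr, vscaleM Hr, vscaleDl Hr,
  vscaleDr Hr, vkact1 Hr, vkactM Hr, vkactDl Hr, vkactDr Hr)).
split; first by split; apply: val_inj; rewrite /= ?(vscale_vkact Hr, vkact_vscale Hr).
split; first by move=> *; apply: val_inj; rewrite /= single_mxD (actDl Hr).
split; first by move=> *; apply: val_inj; rewrite /= (actDr Hr).
split; first by move=> *; apply: val_inj; rewrite /= (single_mx_cscale HA) (act_cscale Hr).
split; first by move=> *; apply: val_inj; rewrite /= (act_vscale Hr).
split; first by move=> *; apply: val_inj; rewrite /= (single_mx_factor HA o) (act_kmul Hr).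
split; first by split; apply: val_inj; rewrite /= ?(single_mx_kact HA, act_kact Hr, act_vkact Hr).
by move=> a x ->; apply: val_inj; rewrite /= single_mx0 (act0l Hr).
Qed.

Lemma corner_nontrivial : exists a (x : corner_vec), corner_act a x <> 0.
Proof.
apply: contrapT => triv; apply: v0nz; apply: row_annihilated_vec0 => i b.
apply: row_annihilated_vec0 => j c; have [->|/negbTE ne_jo] := eqVneq j o.
  apply: contrapT => nz; apply: triv; exists c, (row_vec i b v0) => e; apply: nz.
  by have := congr1 val e; rewrite raddf0.
by rewrite -(act_kmul Hr) (single_mx_mul HA) ne_jo (act0l Hr).
Qed.

Lemma row_vec_off_corner i b x : i != o -> x \in corner_pred -> act (E o i b) x = 0.
Proof.
move=> /negbTE ne_io /corner_predP[c ->]; rewrite (act_sumr Hr) big1 // => l _.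
by rewrite -(act_kmul Hr) (single_mx_mul HA) ne_io (act0l Hr).
Qed.

Lemma corner_stable (U : corner_vec -> Prop) :
  U 0 -> (forall x y, U x -> U y -> U (x + y)) ->
  (forall l x, U x -> U (corner_vs l x)) -> (forall w x, U x -> U (corner_kv w x)) ->
  (forall a x, full_set a -> U x -> U (corner_act a x)) ->
  (forall x, U x -> x = 0) \/ (forall x, U x).
Proof.
move=> U0 UD Us Uk Ua; have Usum I r (P : pred I) (F : I -> corner_vec) :
  (forall i, P i -> U (F i)) -> U (\sum_(i <- r | P i) F i) by apply: big_ind.
have [||||||Urow] := irred_rep_stable Hirr (U := fun v => forall i b, U (row_vec i b v)).
- move=> i b; suff -> : row_vec i b 0 = 0 by [].
  by apply: val_inj; rewrite /= (act0r Hr).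
- move=> v u hv hu i b; suff -> : row_vec i b (v + u) = row_vec i b v + row_vec i b u.
    exact: UD.
  by apply: val_inj; rewrite /= (actDr Hr).
- move=> l v hv i b; suff -> : row_vec i b (vs l v) = corner_vs l (row_vec i b v).
    exact: Us.
  by apply: val_inj; rewrite /= (act_vscale Hr).
- move=> w v hv i b; suff -> : row_vec i b (kv w v) = corner_kv w (row_vec i b v).
    exact: Uk.
  by apply: val_inj; rewrite /= (act_vkact Hr).
- move=> M v hv i b; suff -> : row_vec i b (act M v) = \sum_l row_vec l (km b (M i l)) v.
    exact: Usum.
  by apply: val_inj; rewrite raddf_sum /= -(act_kmul Hr) (mul_single_mx HA) (act_suml Hr).
- move=> Urow0; left => x Ux; apply: val_inj; rewrite raddf0; apply: Urow0 => i b.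
  have [->|ne_io] := eqVneq i o.
    suff -> : row_vec o b (val x) = corner_act b x by exact: Ua.
    exact: val_inj.
  suff -> : row_vec i b (val x) = 0 by [].
  by apply: val_inj; rewrite raddf0 /= row_vec_off_corner //; exact: valP.
right => x; have /corner_predP[c ex] := valP x.
rewrite (_ : x = \sum_l row_vec l (c l) v0); first exact: Usum.
by apply: val_inj; rewrite raddf_sum.
Qed.

Lemma corner_irred :
  is_irred_rep (@full_set (car A)) (@zero_set (car A)) corner_vs corner_act corner_kv.
Proof.
split; first exact: corner_is_rep.
by split; [have [a [x ?]] := corner_nontrivial; exists a, x | exact: corner_stable].
Qed.

Lemma corner_annihilates a : annihilates corner_act a <-> annihilates act (E o o a).
Proof.
split=> [ann_a v|ann_a x]; last by apply: val_inj; rewrite raddf0 /= ann_a.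
have [M ->] := irred_rep_cyclic Hirr v0nz v.
rewrite -(act_kmul Hr) (mul_single_mx HA) (act_suml Hr) big1 // => l _.
rewrite (single_mx_factor HA o) (act_kmul Hr).
by have := congr1 val (ann_a (row_vec l (M o l) v0)); rewrite raddf0.
Qed.

End CornerModule.

Lemma corner_prim : exists Q : car A -> Prop,
  prim Q /\ forall a, Q a <-> annihilates act (E o o a).
Proof.
have [v0 v0nz] := exists_nonzero_vec Hirr.
exists (annihilates (corner_act v0nz)); split=> [|a]; last exact: corner_annihilates.
apply/primP; exists (corner_vec v0), (corner_vs (v0 := v0)), (corner_act v0nz).
by exists (corner_kv (v0 := v0)); split; first exact: corner_irred.
Qed.

End CornerRepresentation.

Section AmplifiedRepresentation.
Variables (k : comAlgType CC) (A : kraw k).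
Variable n : nat.
Variables (U : zmodType) (vsU : CC -> U -> U) (actU : car A -> U -> U).
Variable kvU : k -> U -> U.
Hypothesis Hirr : is_irred_rep (@full_set (car A)) (@zero_set (car A)) vsU actU kvU.
Let Hr := proj1 Hirr.

Local Notation Un := {ffun 'I_n -> U}.
Local Notation E := (@single_mx k A n).

Definition ampl_vs l (x : Un) : Un := [ffun i => vsU l (x i)].
Definition ampl_kv w (x : Un) : Un := [ffun i => kvU w (x i)].
Definition ampl_act (M : car (Mn A n)) (x : Un) : Un :=
  [ffun i => \sum_j actU (M i j) (x j)].
Definition unit_ffun (i : 'I_n) (y : U) : Un := [ffun p => if p == i then y else 0].

Lemma ampl_is_rep :
  is_rep (@full_set (car (Mn A n))) (@zero_set (car (Mn A n))) ampl_vs ampl_act ampl_kv.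
Proof.
do 8 (split; first by move=> *; apply/ffunP => i; rewrite !ffunE ?(vscale1 Hr, vscaleM Hr,
  vscaleDl Hr, vscaleDr Hr, vkact1 Hr, vkactM Hr, vkactDl Hr, vkactDr Hr)).
split; first by split; apply/ffunP => i; rewrite !ffunE ?(vscale_vkact Hr, vkact_vscale Hr).
split.
  move=> M N x _ _; apply/ffunP => i; rewrite !ffunE -big_split /=.
  by apply: eq_bigr => j _; rewrite mxE (actDl Hr).
split.
  move=> M x y _; apply/ffunP => i; rewrite !ffunE -big_split /=.
  by apply: eq_bigr => j _; rewrite ffunE (actDr Hr).
split.
  move=> l M x _; apply/ffunP => i; rewrite !ffunE (vscale_sum Hr).
  by apply: eq_bigr => j _; rewrite mxE (act_cscale Hr).
split.
  move=> l M x _; apply/ffunP => i; rewrite !ffunE (vscale_sum Hr).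
  by apply: eq_bigr => j _; rewrite ffunE (act_vscale Hr).
split.
  move=> M N x _ _; apply/ffunP => i; rewrite !ffunE.
  under eq_bigr do rewrite mulMnE (act_suml Hr).
  rewrite exchange_big /=; apply: eq_bigr => l _.
  by rewrite ffunE (act_sumr Hr); apply: eq_bigr => j _; rewrite (act_kmul Hr).
split.
  move=> w M x _; split; apply/ffunP => i; rewrite !ffunE ?(vkact_sum Hr);
    apply: eq_bigr => j _; rewrite ?ffunE.
    by rewrite mxE (act_kact Hr).
  by rewrite (act_vkact Hr).
move=> M x ->; apply/ffunP => i; rewrite !ffunE big1 // => j _.
by rewrite mxE (act0l Hr).
Qed.

Lemma ampl_act_single i j a x : ampl_act (E i j a) x = unit_ffun i (actU a (x j)).
Proof.
apply/ffunP => p; rewrite !ffunE; case: eqP => [->|/eqP/negbTE ne_pi]; last first.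
  by rewrite big1 // => q _; rewrite mxE ne_pi (act0l Hr).
rewrite (bigD1 j) //= big1 => [|q /negbTE qj]; last by rewrite mxE eqxx qj (act0l Hr).
by rewrite mxE !eqxx addr0.
Qed.

Lemma unit_ffun_sum (x : Un) : x = \sum_i unit_ffun i (x i).
Proof.
apply/ffunP => p; rewrite sum_ffunE (bigD1 p) //= big1 => [|i /negbTE ip].
  by rewrite ffunE eqxx addr0.
by rewrite ffunE eq_sym ip.
Qed.

Lemma ampl_stable (W : Un -> Prop) :
  W 0 -> (forall x y, W x -> W y -> W (x + y)) ->
  (forall l x, W x -> W (ampl_vs l x)) -> (forall w x, W x -> W (ampl_kv w x)) ->
  (forall M x, full_set M -> W x -> W (ampl_act M x)) ->
  (forall x, W x -> x = 0) \/ (forall x, W x).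
Proof.
move=> W0 WD _ _ Wact.
have [W_zero|/existsNP[u /not_implyP[Wu u_nz]]] := pselect (forall x, W x -> x = 0).
  by left.
right; have [j uj_nz] : exists j, u j <> 0.
  by apply/existsNP => u0; apply: u_nz; apply/ffunP => i; rewrite u0 ffunE.
have W_unit i y : W (unit_ffun i y).
  have [a ->] := irred_rep_cyclic Hirr uj_nz y.
  by rewrite -ampl_act_single; exact: Wact.
by move=> x; rewrite (unit_ffun_sum x); apply: big_ind.
Qed.

Variable o : 'I_n.

Lemma ampl_irred :
  is_irred_rep (@full_set (car (Mn A n))) (@zero_set (car (Mn A n)))
    ampl_vs ampl_act ampl_kv.
Proof.
split; first exact: ampl_is_rep.
split; last exact: ampl_stable.
have [a [y ay_nz]] := irred_rep_nontrivial Hirr.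
exists (E o o a), (unit_ffun o y); split=> //.
by rewrite ampl_act_single => /ffunP/(_ o); rewrite !ffunE eqxx.
Qed.

Lemma ampl_annihilates a : annihilates ampl_act (E o o a) -> annihilates actU a.
Proof.
move=> ann_a y; have /ffunP/(_ o) := ann_a (unit_ffun o y).
by rewrite ampl_act_single !ffunE !eqxx.
Qed.

End AmplifiedRepresentation.

Section TrivialFiltration.
Variable k : comAlgType CC.

Lemma kideal0 (X : kraw k) : is_kalg X -> kideal (@zero_set (car X)).
Proof.
move=> HX; split=> //.
split; first by move=> a b -> ->; rewrite addr0.
split; first by move=> a ->; rewrite oppr0.
split; first by move=> l a ->; rewrite (cscale0 HX).
split; first by move=> a b ->; rewrite (kmul0r HX).
split; first by move=> a b ->; rewrite (kmul0l HX).
by move=> w a ->; rewrite (kact0 HX).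
Qed.

Lemma kidealT (X : kraw k) : kideal (@full_set (car X)).
Proof. by []. Qed.

Lemma spec_pres_filt_trivial (X Y : kraw k) (f : car X -> car Y) :
  is_kalg X -> is_kalg Y -> f 0 = 0 -> spec_pres f -> spec_pres_filt f.
Proof.
move=> HX HY f0 spf.
exists 1%N, (fun j => if j == 0%N then @zero_set _ else @full_set _),
  (fun j => if j == 0%N then @zero_set _ else @full_set _).
do 4 (split=> //).
split; first by case=> [|[|]] //= _; split; exact: kideal0 || exact: kidealT.
split; first by case=> [|[|]].
split; first by case=> [|[|]] a //= _ ->.
by case=> [|[|]].
Qed.

End TrivialFiltration.

Section CornerEmbedding.
Variables (k : comAlgType CC) (A : kraw k).
Hypotheses (HA : is_kalg A) (FT : finite_type A).
Variables (n : nat) (o : 'I_n).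

Local Notation E := (@single_mx k A n).

Definition corner_embedding : car A -> car (Mn A n) := E o o.

Lemma corner_kmorph : kmorph corner_embedding.
Proof.
split; first exact: single_mxD.
split; first exact: (single_mx_cscale HA).
split; first by move=> a b; exact: (single_mx_factor HA o).
exact: (single_mx_kact HA).
Qed.

Lemma prim_corner_preimage (P : car (Mn A n) -> Prop) :
  prim P -> exists Q, prim Q /\ forall a, Q a <-> P (E o o a).
Proof.
move=> /primP[V [vs [act [kv [Hirr eP]]]]].
have [Q [pQ eQ]] := corner_prim HA o Hirr.
by exists Q; split=> // a; split=> [/eQ/eP|/eP/eQ].
Qed.

Lemma prim_corner_determined (P : car (Mn A n) -> Prop) : prim P ->
  forall M, P M <-> forall i j a b, P (E o o (kmul (kmul a (M i j)) b)).
Proof.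
move=> /primP[V [vs [act [kv [Hirr eP]]]]] M.
split=> [/eP/(annihilates_corner HA o Hirr) annM i j a b|annE]; first exact/eP/annM.
by apply/eP/(annihilates_corner HA o Hirr) => i j a b; exact/eP/annE.
Qed.

Lemma corner_spec_pres : spec_pres corner_embedding.
Proof.
split; [|split].
- move=> P /prim_corner_preimage[Q [pQ eQ]]; exists Q; split=> //.
  split=> [a [_ /eQ]//|Q' pQ' sub'].
  have QQ' : sub_set Q Q' by move=> a /eQ Pa; exact: sub'.
  by move=> a; split; [exact: QQ' | exact: (prim_sub_sym HA FT pQ pQ' QQ')].
- move=> P1 P2 Q pP1 pP2 pQ sub1 sub2.
  have [Q1 [pQ1 eQ1]] := prim_corner_preimage pP1.
  have [Q2 [pQ2 eQ2]] := prim_corner_preimage pP2.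
  have QQ1 : sub_set Q Q1.
    by apply: prim_sub_sym pQ1 pQ _ => // a /eQ1 ?; exact: sub1.
  have QQ2 : sub_set Q Q2.
    by apply: prim_sub_sym pQ2 pQ _ => // a /eQ2 ?; exact: sub2.
  have P12 a : P1 (E o o a) <-> P2 (E o o a).
    split=> [/eQ1 Q1a|/eQ2 Q2a]; first by apply/eQ2/QQ2/sub1; split=> //; exact/eQ1.
    by apply/eQ1/QQ1/sub2; split=> //; exact/eQ2.
  move=> M; split=> [/(prim_corner_determined pP1) P1M|/(prim_corner_determined pP2) P2M].
    by apply/(prim_corner_determined pP2) => i j a b; exact/P12/P1M.
  by apply/(prim_corner_determined pP1) => i j a b; exact/P12/P2M.
- move=> Q /primP[U [vsU [actU [kvU [Hirr eQ]]]]].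
  exists (annihilates (ampl_act (n := n) actU)); split.
    apply/primP; exists {ffun 'I_n -> U}, (ampl_vs (n := n) vsU),
      (ampl_act actU), (ampl_kv (n := n) kvU).
    by split=> //; exact: ampl_irred o.
  by move=> a [_ /(ampl_annihilates Hirr)/eQ].
Qed.

End CornerEmbedding.

Theorem proposition8p5 (k : comAlgType CC) (Hk : coord_alg k)
    (A : kraw k) (HA : ft_kalg A) (n : nat) (Hn : (0 < n)%N) :
  strat_eq A (Mn A n).
Proof.
case: n Hn => [//|n] _; case: HA => HA FT.
have HM : is_kalg (Mn A n.+1) := Mn_kalg HA n.+1.
apply: (@se_spec _ _ _ (@corner_embedding _ A _ ord0)).
- by split.
- by split=> //; exact: Mn_finite_type.
- exact: corner_kmorph.
apply: spec_pres_filt_trivial => //; first exact: single_mx0.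
exact: corner_spec_pres.
Qed.
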